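(* Let $e_1<e_2<e_3<e_4$ be distinct reals. On $T^*S^3=\{(\mathbf x,\mathbf y)\in\mathbb R^8:\mathbf x\cdot\mathbf x=1,\mathbf x\cdot\mathbf y=0\}$ let $\ell_{ij}=x_iy_j-x_jy_i$, let $F_i=\sum_{j\ne i}\frac{\ell_{ij}^2}{e_i-e_j}$ ($i=1,\dots,4$, with $\ell_{ji}=-\ell_{ij}$) be the Uhlenbeck integrals, and let $\eta_1=\sum_{i<j}\ell_{ij}^2\sum_{k\ne i,j}e_k$, $\eta_2=\sum_{i<j}\ell_{ij}^2\prod_{k\ne i,j}e_k$. On the energy level $2H=\mathbf y\cdot\mathbf y=1$, $F_i=0$ if and only if $\eta_2-e_i(\eta_1-e_i)=0$; i.e. $F_i$ vanishes exactly along the line $\mathcal L_i:\eta_2-e_i(\eta_1-e_i)=0$.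
   Context: The condition $2H=1$ (i.e. $\sum_{i<j}\ell_{ij}^2=1$) is the normalisation used for the line $\mathcal L_i$. *)

From HB Require Import structures.
From mathcomp Require Import all_boot all_order all_algebra.
Set Implicit Arguments. Unset Strict Implicit. Unset Printing Implicit Defensive.
Import Order.TTheory GRing.Theory Num.Theory.
Local Open Scope ring_scope.

(* Points of R^8 are pairs (x, y) of vectors x y : 'I_4 -> R (coordinates x_1..x_4, y_1..y_4,
   indexed 0..3). *)

Definition dot4 {R : realFieldType} (x y : 'I_4 -> R) : R := \sum_(i < 4) x i * y i.

Definition ell {R : realFieldType} (x y : 'I_4 -> R) (i j : 'I_4) : R :=
  x i * y j - x j * y i.

Definition uhlenbeckF {R : realFieldType} (e x y : 'I_4 -> R) (i : 'I_4) : R :=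
  \sum_(j < 4 | j != i) (ell x y i j) ^+ 2 / (e i - e j).

Definition eta1 {R : realFieldType} (e x y : 'I_4 -> R) : R :=
  \sum_(i < 4) \sum_(j < 4 | (i < j)%N)
     (ell x y i j) ^+ 2 * \sum_(k < 4 | (k != i) && (k != j)) e k.

Definition eta2 {R : realFieldType} (e x y : 'I_4 -> R) : R :=
  \sum_(i < 4) \sum_(j < 4 | (i < j)%N)
     (ell x y i j) ^+ 2 * \prod_(k < 4 | (k != i) && (k != j)) e k.

From HB Require Import structures.
From mathcomp Require Import all_boot all_order all_algebra.
From mathcomp Require Import ring.
Import Order.TTheory GRing.Theory Num.Theory.
Local Open Scope ring_scope.

(* Multiplying F_i by P_i = prod_{j <> i} (e_i - e_j), which is nonzero because
   the e_j are distinct, gives the polynomial identity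
     P_i F_i = eta_2 - e_i (eta_1 - e_i S),   S = sum_{a<b} l_ab^2.
   By Lagrange's identity S = |x|^2 |y|^2 - (x.y)^2, which is 1 on the energy
   level 2H = 1 of T*S^3, so F_i = 0 exactly on the line L_i. *)

Lemma sumr_sym_pairs (V : nmodType) n (F : 'I_n -> 'I_n -> V) :
  (forall i j, F i j = F j i) -> (forall i, F i i = 0) ->
  \sum_(i < n) \sum_(j < n) F i j = (\sum_(i < n) \sum_(j < n | (i < j)%N) F i j) *+ 2.
Proof.
move=> Fsym Fdiag; rewrite mulr2n.
have split_row i : \sum_(j < n) F i j =
    \sum_(j < n | (i < j)%N) F i j + \sum_(j < n | (j < i)%N) F i j.
  rewrite (bigID (fun j : 'I_n => (i < j)%N)) /=; congr (_ + _).
  rewrite (bigD1 i) ?ltnn //= Fdiag add0r; apply: eq_bigl => j.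
  by rewrite -leqNgt andbC ltn_neqAle.
rewrite (eq_bigr _ (fun i _ => split_row i)) big_split /=; congr (_ + _).
rewrite (exchange_big_dep predT) //=.
by apply: eq_bigr => i _; apply: eq_bigr => j _; apply: Fsym.
Qed.

Lemma lagrange_identity (R : numDomainType) n (x y : 'I_n -> R) :
  \sum_(i < n) \sum_(j < n | (i < j)%N) (x i * y j - x j * y i) ^+ 2 =
  (\sum_(i < n) x i * x i) * (\sum_(i < n) y i * y i) - (\sum_(i < n) x i * y i) ^+ 2.
Proof.
apply: (@pmulrnI _ 2) => //; rewrite -sumr_sym_pairs; last first.
- by move=> i; rewrite subrr expr0n.
- by move=> i j; rewrite -sqrrN opprB.
transitivity (\sum_(i < n) \sum_(j < n)
    (x i * x i * (y j * y j) + x j * x j * (y i * y i) - (x i * y i * (x j * y j)) *+ 2)).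
  by apply: eq_bigr => i _; apply: eq_bigr => j _; ring.
under eq_bigr => i _ do rewrite sumrB big_split sumrMnl /=.
rewrite sumrB big_split sumrMnl /= [X in _ + X - _]exchange_big /= !big_distrlr /=.
by rewrite expr2 big_distrlr /=; ring.
Qed.

Lemma sum_ell2 (R : realFieldType) (x y : 'I_4 -> R) :
  \sum_(i < 4) \sum_(j < 4 | (i < j)%N) ell x y i j ^+ 2 =
  dot4 x x * dot4 y y - dot4 x y ^+ 2.
Proof. exact: lagrange_identity. Qed.

Definition o0 : 'I_4 := @Ordinal 4 0 isT.
Definition o1 : 'I_4 := @Ordinal 4 1 isT.
Definition o2 : 'I_4 := @Ordinal 4 2 isT.
Definition o3 : 'I_4 := @Ordinal 4 3 isT.

Lemma big_ord4 (T : Type) (idx : T) (op : Monoid.law idx) (F : 'I_4 -> T) :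
  \big[op/idx]_(j < 4) F j = op (op (op (F o0) (F o1)) (F o2)) (F o3).
Proof.
rewrite !big_ord_recr big_ord0 /= Monoid.mul1m.
by congr (op (op (op (F _) (F _)) (F _)) (F _)); apply: val_inj.
Qed.

Lemma ord4_cases (i : 'I_4) : [\/ i = o0, i = o1, i = o2 | i = o3].
Proof.
case: i => -[|[|[|[|//]]]] lti4;
  [constructor 1 | constructor 2 | constructor 3 | constructor 4]; exact: val_inj.
Qed.

(* The coefficient of l_ab^2 on the right is prod_{k <> a, b} (e_i - e_k): it
   vanishes unless i is a or b, and equals P_i / (e_i - e_b) when a = i. *)
Lemma uhlenbeckF_eta (R : realFieldType) (e x y : 'I_4 -> R) (i : 'I_4) :
  injective e ->
  (\prod_(j < 4 | j != i) (e i - e j)) * uhlenbeckF e x y i =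
  eta2 e x y - e i * (eta1 e x y
                      - e i * \sum_(a < 4) \sum_(b < 4 | (a < b)%N) ell x y a b ^+ 2).
Proof.
move=> inj_e; have e_neq j k : j != k -> e j - e k != 0.
  by rewrite subr_eq0 (inj_eq inj_e).
rewrite /uhlenbeckF /eta1 /eta2 /ell.
case: (ord4_cases i) => ->; do ![rewrite big_mkcond big_ord4 /=].
all: by field; rewrite !e_neq.
Qed.

Theorem corollary2 (R : realFieldType) (e x y : 'I_4 -> R)
  (he : forall i j : 'I_4, (i < j)%N -> e i < e j)
  (hxx : dot4 x x = 1) (hxy : dot4 x y = 0) (hyy : dot4 y y = 1)
  (i : 'I_4) :
  uhlenbeckF e x y i = 0 <-> eta2 e x y - e i * (eta1 e x y - e i) = 0.
Proof.
have inj_e : injective e.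
  move=> j k ejk; apply/val_inj/eqP.
  by case: ltngtP => // /he; rewrite ejk ltxx.
have P_neq0 : \prod_(j < 4 | j != i) (e i - e j) != 0.
  by apply/prodf_neq0 => j; rewrite subr_eq0 (inj_eq inj_e) eq_sym.
have := @uhlenbeckF_eta R e x y i inj_e.
rewrite sum_ell2 hxx hyy hxy expr0n /= subr0 !mulr1 => <-.
split=> [-> | /eqP]; first by rewrite mulr0.
by rewrite mulf_eq0 (negbTE P_neq0) => /eqP.
Qed.
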